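(* Let $p,q$ be positive integers, let $e\in\mathbb{R}^p$ be the vector of all ones, and let $$L:=\{(x,u)\in\mathbb{R}^p\times\mathbb{R}^q : x\ge \|u\|e\}$$ (componentwise order). Let $x,y\in\mathbb{R}^p$ and $u,v\in\mathbb{R}^q\setminus\{0\}$. Then $((x,u),(y,v))\in C(L)$ if and only if there exists $\lambda>0$ such that $v=-\lambda u$, $\langle y,e\rangle=\|v\|$, and $(x-\|u\|e,\,y)\in C(\mathbb{R}^p_+)$, i.e. $x-\|u\|e\ge 0$, $y\ge 0$ and $\langle x-\|u\|e,y\rangle=0$.
   Context: For a proper cone $K\subset\mathbb{R}^\ell$, its dual cone is $K^*:=\{x\in\mathbb{R}^\ell:\langle x,y\rangle\ge0\ \forall y\in K\}$, and its complementarity set is $C(K):=\{(x,y)\in K\times K^*: \langle x,y\rangle=0\}$. Elements of $\mathbb{R}^p\times\mathbb{R}^q$ are identified with vectors of $\mathbb{R}^{p+q}$, with inner product $\langle (x,u),(y,v)\rangle=\langle x,y\rangle+\langle u,v\rangle$. The inequality $\ge$ between vectors is componentwise; $\mathbb{R}^p_+=\{x\in\mathbb{R}^p:x\ge0\}$ (which is self-dual). The cone $L$ is a proper cone, and its dual is $L^*=M:=\{(y,v)\in\mathbb{R}^p\times\mathbb{R}^q:\langle y,e\rangle\ge\|v\|,\ y\ge0\}$. *)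

From HB Require Import structures.
From mathcomp Require Import all_boot all_order all_algebra.
Set Implicit Arguments. Unset Strict Implicit. Unset Printing Implicit Defensive.
Import Order.TTheory GRing.Theory Num.Theory.
Local Open Scope ring_scope.

Section Defs.
Variable R : rcfType.

Definition dotv (n : nat) (x y : 'rV[R]_n) : R := \sum_(i < n) x 0 i * y 0 i.

Definition normv (n : nat) (u : 'rV[R]_n) : R := Num.sqrt (dotv u u).

Definition onesv (n : nat) : 'rV[R]_n := const_mx 1.

Definition nonneg (n : nat) (x : 'rV[R]_n) : Prop := forall i, 0 <= x 0 i.

Definition orthant (n : nat) : 'rV[R]_n -> Prop := fun x => nonneg x.

Definition dotpair (p q : nat) (a b : 'rV[R]_p * 'rV[R]_q) : R :=
  dotv a.1 b.1 + dotv a.2 b.2.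

Definition dual_cone (V : Type) (ip : V -> V -> R) (K : V -> Prop) : V -> Prop :=
  fun y => forall x, K x -> 0 <= ip x y.

Definition compl_set (V : Type) (ip : V -> V -> R) (K : V -> Prop) : V * V -> Prop :=
  fun xy => K xy.1 /\ dual_cone ip K xy.2 /\ ip xy.1 xy.2 = 0.

Definition Lcone (p q : nat) : 'rV[R]_p * 'rV[R]_q -> Prop :=
  fun a => nonneg (a.1 - normv a.2 *: onesv p).

End Defs.

(* The dual of L is M = {(y, v) : y >= 0, <y, e> >= ||v||}, by Cauchy-Schwarz.
   For (x, u) in L and (y, v) in M the inner product splits as
     <x - ||u|| e, y> + ||u|| (<y, e> - ||v||) + (||u|| ||v|| + <u, v>),
   a sum of three nonnegative terms, so complementarity means that all three
   vanish; the last one vanishes exactly when v is a nonpositive multiple of u,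
   the equality case of Cauchy-Schwarz. *)
From HB Require Import structures.
From mathcomp Require Import all_boot all_order all_algebra.
From mathcomp Require Import ring lra.
Import Order.TTheory GRing.Theory Num.Theory.
Set Implicit Arguments. Unset Strict Implicit. Unset Printing Implicit Defensive.
Local Open Scope ring_scope.

Section InnerProduct.
Variables (R : rcfType) (n : nat).
Implicit Types x y z : 'rV[R]_n.

Lemma dotvC x y : dotv x y = dotv y x.
Proof. by apply: eq_bigr => i _; rewrite mulrC. Qed.

Lemma dotvDl x y z : dotv (x + y) z = dotv x z + dotv y z.
Proof. by rewrite /dotv -big_split; apply: eq_bigr => i _; rewrite mxE mulrDl. Qed.

Lemma dotvZl (a : R) x y : dotv (a *: x) y = a * dotv x y.
Proof. by rewrite /dotv mulr_sumr; apply: eq_bigr => i _; rewrite mxE mulrA. Qed.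

Lemma dotvDr x y z : dotv x (y + z) = dotv x y + dotv x z.
Proof. by rewrite dotvC dotvDl !(dotvC x). Qed.

Lemma dotvZr (a : R) x y : dotv x (a *: y) = a * dotv x y.
Proof. by rewrite dotvC dotvZl dotvC. Qed.

Lemma dotvNl x y : dotv (- x) y = - dotv x y.
Proof. by rewrite -scaleN1r dotvZl mulN1r. Qed.

Lemma dotvNr x y : dotv x (- y) = - dotv x y.
Proof. by rewrite dotvC dotvNl dotvC. Qed.

Lemma dotv0l y : dotv 0 y = 0.
Proof. by rewrite -(scale0r (0 : 'rV[R]_n)) dotvZl mul0r. Qed.

Lemma dotvv_ge0 x : 0 <= dotv x x.
Proof. by apply: sumr_ge0 => i _; rewrite -expr2 sqr_ge0. Qed.

Lemma dotvv_eq0 x : dotv x x = 0 -> x = 0.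
Proof.
move=> /eqP; rewrite psumr_eq0; last by move=> i _; rewrite -expr2 sqr_ge0.
move=> /allP x_eq0; apply/rowP => i; rewrite mxE.
by have := x_eq0 i (mem_index_enum _); rewrite /= mulf_eq0 orbb => /eqP.
Qed.

Lemma dotv_delta (i : 'I_n) y : dotv (delta_mx 0 i) y = y 0 i.
Proof.
rewrite /dotv (bigD1 i) //= big1 ?addr0; first by rewrite mxE !eqxx mul1r.
by move=> j ji; rewrite mxE eqxx /= (negbTE ji) mul0r.
Qed.

Lemma normv_ge0 x : 0 <= normv x.
Proof. exact: sqrtr_ge0. Qed.

Lemma sqr_normv x : normv x ^+ 2 = dotv x x.
Proof. by rewrite /normv sqr_sqrtr // dotvv_ge0. Qed.

Lemma normv_eq0 x : normv x = 0 -> x = 0.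
Proof. by move=> x0; apply: dotvv_eq0; rewrite -sqr_normv x0 expr0n. Qed.

Lemma normv_gt0 x : x != 0 -> 0 < normv x.
Proof. by move=> /eqP x0; rewrite lt_def normv_ge0 andbT; apply/eqP => /normv_eq0. Qed.

Lemma normv0 : normv (0 : 'rV[R]_n) = 0.
Proof. by rewrite /normv dotv0l sqrtr0. Qed.

Lemma normvZ (a : R) x : normv (a *: x) = `|a| * normv x.
Proof.
by rewrite /normv dotvZl dotvZr mulrA -expr2 sqrtrM ?sqr_ge0 // sqrtr_sqr.
Qed.

Lemma normvN x : normv (- x) = normv x.
Proof. by rewrite -scaleN1r normvZ normrN1 mul1r. Qed.

Lemma dotvv_normZD x y :
  dotv (normv y *: x + normv x *: y) (normv y *: x + normv x *: y) =
  2 * normv x * normv y * (normv x * normv y + dotv x y).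
Proof. by rewrite !dotvDl !dotvDr !dotvZl !dotvZr (dotvC y x) -!sqr_normv; ring. Qed.

Lemma dotv_ge_oppM_normv x y : - (normv x * normv y) <= dotv x y.
Proof.
rewrite -subr_ge0 opprK.
have [->|x0] := eqVneq x 0; first by rewrite normv0 dotv0l mul0r addr0.
have [->|y0] := eqVneq y 0; first by rewrite normv0 dotvC dotv0l mulr0 addr0.
have xy_gt0 : 0 < 2 * normv x * normv y by rewrite !mulr_gt0 ?normv_gt0.
have := dotvv_ge0 (normv y *: x + normv x *: y).
by rewrite dotvv_normZD (pmulr_rge0 _ xy_gt0) addrC.
Qed.

Lemma dotv_eq_oppM_normv x y :
  dotv x y = - (normv x * normv y) -> normv y *: x = - (normv x *: y).
Proof.
move=> xy; apply/eqP; rewrite -addr_eq0; apply/eqP/dotvv_eq0.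
by rewrite dotvv_normZD xy subrr mulr0.
Qed.

Lemma nonneg_onesv : nonneg (onesv R n).
Proof. by move=> i; rewrite mxE ler01. Qed.

Lemma nonneg_dotv x y : nonneg x -> nonneg y -> 0 <= dotv x y.
Proof. by move=> x_ge0 y_ge0; apply: sumr_ge0 => i _; apply: mulr_ge0. Qed.

Lemma dual_orthantE y : dual_cone (@dotv R n) (@orthant R n) y <-> nonneg y.
Proof.
split=> [y_dual i | y_ge0 x x_ge0]; last exact: nonneg_dotv.
by rewrite -dotv_delta; apply: y_dual => j; rewrite mxE ler0n.
Qed.

End InnerProduct.

Section Lcone.
Variables (R : rcfType) (p q : nat).
Local Notation e := (onesv R p).

Lemma dotpair_Lcone_split (x y : 'rV[R]_p) (u v : 'rV[R]_q) :
  dotpair (x, u) (y, v) =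
  dotv (x - normv u *: e) y + normv u * (dotv y e - normv v)
  + (normv u * normv v + dotv u v).
Proof. by rewrite /dotpair /= dotvDl dotvNl dotvZl (dotvC e y); ring. Qed.

Lemma dual_LconeE (y : 'rV[R]_p) (v : 'rV[R]_q) :
  dual_cone (@dotpair R p q) (@Lcone R p q) (y, v) <->
  nonneg y /\ normv v <= dotv y e.
Proof.
split=> [yv_dual | [y_ge0 v_le] [x u] xu_L].
  have y_ge0 : nonneg y.
    apply/dual_orthantE => x x_ge0; have := yv_dual (x, 0).
    by rewrite /Lcone /dotpair /= normv0 scale0r subr0 dotv0l addr0; apply.
  split=> //; have ye_ge0 := nonneg_dotv y_ge0 (@nonneg_onesv R p).
  have := yv_dual (normv v *: e, - v).
  rewrite /Lcone /dotpair /= normvN subrr dotvZl dotvNl -sqr_normv dotvC.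
  have zero_ge0 : nonneg (0 : 'rV[R]_p) by move=> i; rewrite mxE.
  by move=> /(_ zero_ge0); nra.
rewrite dotpair_Lcone_split.
have := nonneg_dotv xu_L y_ge0; have := dotv_ge_oppM_normv u v.
by have := normv_ge0 u; nra.
Qed.

End Lcone.

Theorem proposition1 (R : rcfType) (p q : nat) (hp : (0 < p)%N) (hq : (0 < q)%N)
    (x y : 'rV[R]_p) (u v : 'rV[R]_q) (hu : u != 0) (hv : v != 0) :
  compl_set (@dotpair R p q) (@Lcone R p q) ((x, u), (y, v)) <->
  exists lambda : R, 0 < lambda /\ v = - (lambda *: u) /\
    dotv y (onesv R p) = normv v /\
    compl_set (@dotv R p) (@orthant R p) (x - normv u *: onesv R p, y).
Proof.
have u_gt0 := normv_gt0 hu; have v_gt0 := normv_gt0 hv.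
rewrite /compl_set /= dotpair_Lcone_split.
split=> [[xu_L [/dual_LconeE [y_ge0 v_le] xuyv0]] | ].
  have := nonneg_dotv xu_L y_ge0; have := dotv_ge_oppM_normv u v => uv_ge xy_ge.
  have uv_eq : dotv u v = - (normv u * normv v) by nra.
  exists (normv v / normv u); split; first exact: divr_gt0.
  split.
    apply: (scalerI (lt0r_neq0 u_gt0)).
    rewrite scalerN scalerA mulrC divfK ?lt0r_neq0 //.
    by rewrite (dotv_eq_oppM_normv uv_eq) opprK.
  split; first nra.
  by split => //; split; [apply/dual_orthantE | nra].
move=> [l [l_gt0 [-> [ye [xu_L [/dual_orthantE y_ge0 xy0]]]]]].
have v_eq : normv (- (l *: u)) = l * normv u by rewrite normvN normvZ gtr0_norm.
split=> //; split; first by apply/dual_LconeE; rewrite ye.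
rewrite xy0 ye v_eq dotvNr dotvZr -sqr_normv; ring.
Qed.
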